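(* For $i=1,\dots,d$ let $K_i(z,z')=f_i(z)f_i(z')g_i(zz')$ be an interpretable Taylor kernel on a connected domain $\mathcal{X}_i\subseteq\mathbb{R}$, and let $K(x,y)=\prod_{i=1}^d K_i(x_i,y_i)$ on $\mathcal{X}=\mathcal{X}_1\times\dots\times\mathcal{X}_d$. Fix an integer $M\ge 0$ and let $\phi_{i,j}(z)=z^j f_i(z)\sqrt{g_i^{(j)}(0)/j!}$ for $i\in[d]$, $0\le j\le M$ (the surrogate features of order $M$). Then threshold cuts on surrogate features yield interpretable splits: for every finite set $S\subset\mathcal{X}$, every $i\in[d]$, $0\le j\le M$ and $\theta\in\mathbb{R}$, the partition of $S$ into $\{x\in S:\phi_{i,j}(x_i)\le\theta\}$ and $\{x\in S:\phi_{i,j}(x_i)>\theta\}$ is of the form $\{x\in S: x_i\in[\theta_1,\theta_2]\}$ and $\{x\in S:x_i\notin[\theta_1,\theta_2]\}$ for some real $\theta_1<\theta_2$ (in some order of the two parts). Consequently, any decision tree on a finite dataset in $\mathcal{X}$ whose internal nodes split the data by threshold cuts $\phi_{i,j}(x_i)\le\theta$ versus $\phi_{i,j}(x_i)>\theta$ is an interpretable decision tree.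
   Context: An interpretable Taylor kernel is a bounded kernel $K_i$ on a connected domain $\mathcal{X}_i\subseteq\mathbb{R}$ of the form $K_i(z,z')=f(z)f(z')g(zz')$ with $f$ differentiable and $g$ analytic, such that $g^{(j)}(0)\ge 0$ for all $j\in\mathbb{N}$ ($g^{(j)}$ the $j$-th derivative) and such that for every $j\in\mathbb{N}$ the equation $z^{j-1}(zf'(z)+jf(z))=0$ has at most one solution $z\in\mathcal{X}_i$. An interpretable decision tree on a dataset $X\subset\mathbb{R}^d$ is a binary tree partitioning $X$ in which at every internal node $u$, receiving data $X^u$, there exist $i\in[d]$ and real $\theta_1<\theta_2$ such that $X^u$ is split into $\{x\in X^u:x_i\in[\theta_1,\theta_2]\}$ and $\{x\in X^u:x_i\notin[\theta_1,\theta_2]\}$. *)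

From HB Require Import structures.
From mathcomp Require Import all_boot all_order all_algebra.
From mathcomp Require Import all_classical all_reals all_analysis.
Set Implicit Arguments. Unset Strict Implicit. Unset Printing Implicit Defensive.
Import Order.TTheory GRing.Theory Num.Theory numFieldNormedType.Exports.
Local Open Scope classical_set_scope.
Local Open Scope ring_scope.

Section Defs.
Variable R : realType.

Definition analytic_on (D : set R) (g : R -> R) : Prop :=
  forall x, D x -> exists r : R, 0 < r /\ exists a : nat -> R,
    forall y, `|y - x| < r ->
      (fun n : nat => \sum_(k < n) a k * (y - x) ^+ k) @ \oo --> g y.

Definition psd_kernel_on (X : set R) (K : R -> R -> R) : Prop :=
  forall (n : nat) (z : 'I_n -> R) (c : 'I_n -> R), (forall k, X (z k)) ->
    0 <= \sum_(k < n) \sum_(l < n) c k * c l * K (z k) (z l).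

(* the expression z^{j-1} (z f'(z) + j f(z)) (= d/dz (z^j f(z)));
   for j = 0 it is z^{-1}(z f'(z)) = f'(z) *)
Definition taylor_crit (f : R -> R) (j : nat) (z : R) : R :=
  if j == 0%N then derive1 f z
  else z ^+ j.-1 * (z * derive1 f z + j%:R * f z).

Definition interpretable_taylor_kernel (X : set R) (f g : R -> R) : Prop :=
  connected X /\
      psd_kernel_on X (fun z z' => f z * f z' * g (z * z')) /\
      (exists B : R, forall z z', X z -> X z' -> `|f z * f z' * g (z * z')| <= B) /\
      (forall z, X z -> derivable f z 1) /\
      (exists D : set R, [/\ open D, D 0,
          (forall z z', X z -> X z' -> D (z * z')) & analytic_on D g]) /\
      (forall j : nat, 0 <= derive1n j g 0) /\
      (forall (j : nat) (z1 z2 : R), X z1 -> X z2 ->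
          taylor_crit f j z1 = 0 -> taylor_crit f j z2 = 0 -> z1 = z2).

Definition surrogate_feature (f g : R -> R) (j : nat) (z : R) : R :=
  z ^+ j * f z * Num.sqrt (derive1n j g 0 / (j`!)%:R).

Variable d : nat.

Definition interpretable_split (S : set ('I_d -> R)) (P : ('I_d -> R) -> Prop) :=
  exists (i : 'I_d) (t1 t2 : R), t1 < t2 /\
   (([set x | S x /\ P x] = [set x | S x /\ t1 <= x i <= t2] /\
     [set x | S x /\ ~ P x] = [set x | S x /\ ~ (t1 <= x i <= t2)]) \/
    ([set x | S x /\ ~ P x] = [set x | S x /\ t1 <= x i <= t2] /\
     [set x | S x /\ P x] = [set x | S x /\ ~ (t1 <= x i <= t2)])).

Inductive split_tree : Type :=
  | SLeaf : split_tree
  | SNode : (('I_d -> R) -> Prop) -> split_tree -> split_tree -> split_tree.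

Fixpoint interpretable_tree (T : split_tree) (S : set ('I_d -> R)) : Prop :=
  match T with
  | SLeaf => True
  | SNode P l r => [/\ interpretable_split S P,
                       interpretable_tree l [set x | S x /\ P x] &
                       interpretable_tree r [set x | S x /\ ~ P x]]
  end.

Inductive cut_tree : Type :=
  | CLeaf : cut_tree
  | CNode : 'I_d -> nat -> R -> cut_tree -> cut_tree -> cut_tree.

Fixpoint cut_tree_orders_le (M : nat) (T : cut_tree) : Prop :=
  match T with
  | CLeaf => True
  | CNode _ j _ l r => (j <= M)%N /\ cut_tree_orders_le M l /\ cut_tree_orders_le M r
  end.

Fixpoint cut_tree_to_split_tree (f g : 'I_d -> R -> R) (T : cut_tree) : split_tree :=
  match T with
  | CLeaf => SLeaf
  | CNode i j th l r =>
      SNode (fun x => surrogate_feature (f i) (g i) j (x i) <= th)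
            (cut_tree_to_split_tree f g l) (cut_tree_to_split_tree f g r)
  end.

End Defs.

(* A cut phi_{i,j}(x_i) <= theta depends on x_i only through h(z) = z^j f_i(z),
   scaled by the constant sqrt(g_i^(j)(0)/j!) >= 0, and the defining condition
   of an interpretable Taylor kernel says that h has at most one critical point
   on the interval X_i.  If neither {h <= theta} nor {h > theta} were
   order-convex in X_i, h would have an interior maximum above theta and an
   interior minimum below it, i.e. two distinct critical points.  So one side
   of the cut is order-convex, and on the finitely many values of x_i in the
   data an order-convex set is cut out by a nondegenerate interval. *)

From HB Require Import structures.
From mathcomp Require Import all_boot all_order all_algebra.
From mathcomp Require Import all_classical all_reals all_analysis.
From mathcomp Require Import ring lra.
Set Implicit Arguments. Unset Strict Implicit. Unset Printing Implicit Defensive.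
Import Order.TTheory GRing.Theory Num.Theory numFieldNormedType.Exports.
Local Open Scope classical_set_scope.
Local Open Scope ring_scope.

Section FiniteSetsOfReals.
Variable R : realType.
Implicit Types (A V : set R) (Q : R -> Prop).

Lemma finite_set_has_max A : finite_set A -> A !=set0 ->
  exists2 m, A m & forall a, A a -> a <= m.
Proof.
move=> fA A0; have idA : {within A, continuous (@id R)}.
  by apply: continuous_subspaceT => x; exact: cvg_id.
have [m /set_mem Am mmax] := compact_EVT_max A0 (finite_compact fA) idA.
by exists m => // a Aa; apply: mmax; exact: mem_set.
Qed.

Lemma finite_set_has_min A : finite_set A -> A !=set0 ->
  exists2 m, A m & forall a, A a -> m <= a.
Proof.
move=> fA A0; have idA : {within A, continuous (@id R)}.
  by apply: continuous_subspaceT => x; exact: cvg_id.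
have [m /set_mem Am mmin] := compact_EVT_min A0 (finite_compact fA) idA.
by exists m => // a Aa; apply: mmin; exact: mem_set.
Qed.

Lemma finite_set_gap_above V (a : R) : finite_set V ->
  exists2 t, a < t & forall v, V v -> a < v -> t < v.
Proof.
move=> fV; pose W := [set v | V v /\ a < v] `|` [set a + 1].
have fW : finite_set W.
  by rewrite finite_setU; split; [apply: sub_finite_set fV => v []|exact: finite_set1].
have [m Wm mmin] := finite_set_has_min fW (ex_intro _ (a + 1) (or_intror erefl)).
have am : a < m by case: Wm => [[]|->] //; lra.
exists ((a + m) / 2); first lra.
by move=> v Vv av; have := mmin v (or_introl (conj Vv av)); lra.
Qed.

Definition order_convex V Q :=
  forall a b c, V a -> V b -> V c -> a <= b -> b <= c -> Q a -> Q c -> Q b.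

Lemma order_convex_sub V V' Q : V' `<=` V -> order_convex V Q -> order_convex V' Q.
Proof. by move=> V'V cQ a b c /V'V Va /V'V Vb /V'V Vc; exact: cQ. Qed.

Lemma finite_order_convex_itv V Q : finite_set V -> order_convex V Q ->
  exists t1 t2, t1 < t2 /\ forall v, V v -> (Q v <-> t1 <= v <= t2).
Proof.
move=> fV cQ.
have [[a0 [Va0 Qa0]]|noQ] := pselect (exists a, V a /\ Q a).
- have fA : finite_set (V `&` Q) by apply: sub_finite_set fV => v [].
  have A0 : (V `&` Q) !=set0 by exists a0.
  have [lo [Vlo Qlo] lo_min] := finite_set_has_min fA A0.
  have [hi [Vhi Qhi] hi_max] := finite_set_has_max fA A0.
  (* the gap above [hi] keeps [lo < t2] even when [lo = hi] *)
  have [t2 hi_t2 gap] := finite_set_gap_above hi fV.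
  have lo_hi := hi_max lo (conj Vlo Qlo).
  exists lo, t2; split; first lra.
  move=> v Vv; split => [Qv|/andP[lo_v v_t2]].
    by have := lo_min v (conj Vv Qv); have := hi_max v (conj Vv Qv); lra.
  apply: (cQ lo v hi) => //; rewrite leNgt; apply/negP => /(gap v Vv); lra.
- have [t t_gt0 gap] := finite_set_gap_above 0 fV.
  exists (t / 2), t; split; first lra.
  move=> v Vv; split => [Qv|/andP[v1 v2]]; first by case: noQ; exists v.
  by have := gap v Vv; lra.
Qed.

End FiniteSetsOfReals.

Section InterpretableSplits.
Variables (R : realType) (d : nat) (S : set ('I_d -> R)).

Lemma interpretable_split_itv (P : ('I_d -> R) -> Prop) (i : 'I_d) (t1 t2 : R) :
  t1 < t2 -> (forall x, S x -> (P x <-> t1 <= x i <= t2)) ->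
  interpretable_split S P.
Proof.
move=> t12 PE; exists i, t1, t2; split => //; left.
split; apply/seteqP; split => x [Sx] /=.
- by move/(PE x Sx).
- by move/(PE x Sx).
- by move=> nPx; split => // /(PE x Sx).
- by move=> nI; split => // /(PE x Sx).
Qed.

Lemma interpretable_splitN (P : ('I_d -> R) -> Prop) :
  interpretable_split S (fun x => ~ P x) -> interpretable_split S P.
Proof.
have nnP : [set x | S x /\ ~ ~ P x] = [set x | S x /\ P x].
  by apply: eq_set => x; rewrite not_notE.
move=> [i [t1 [t2 [t12 H]]]]; exists i, t1, t2; split => //.
by rewrite nnP in H; case: H => -[E1 E2]; [right|left].
Qed.

Lemma interpretable_split_order_convex (i : 'I_d) (Y : set R) (Q : R -> Prop) :
  finite_set S -> (forall x, S x -> Y (x i)) ->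
  order_convex Y Q \/ order_convex Y (fun z => ~ Q z) ->
  interpretable_split S (fun x => Q (x i)).
Proof.
move=> fS SY cQ.
have fV : finite_set ((fun x => x i) @` S) by exact: finite_image.
have VY : (fun x => x i) @` S `<=` Y by move=> _ [x Sx <-]; exact: SY.
have itv Q' : order_convex Y Q' -> exists t1 t2,
    t1 < t2 /\ forall x, S x -> (Q' (x i) <-> t1 <= x i <= t2).
  move=> /(order_convex_sub VY) /(finite_order_convex_itv fV)[t1 [t2 [t12 H]]].
  by exists t1, t2; split => // x Sx; apply: H; exists x.
case: cQ => /itv[t1 [t2 [t12 H]]]; last apply: interpretable_splitN;
  exact: interpretable_split_itv t12 H.
Qed.

End InterpretableSplits.

Section CriticalPoints.
Variables (R : realType) (X : set R).
Hypothesis X_itv : is_interval X.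

Lemma critical_point_above (h : R -> R) (a b c : R) :
  (forall z, X z -> derivable h z 1) -> X a -> X c ->
  a <= b -> b <= c -> h a < h b -> h c < h b ->
  exists2 m, X m & is_derive m 1 h 0 /\ h b <= h m.
Proof.
move=> h_der Xa Xc ab bc ha hc.
have ac : a <= c := le_trans ab bc.
have acX t : t \in `[a, c] -> X t.
  by rewrite in_itv /= => /andP[a_t t_c]; apply: X_itv Xa Xc _ _; rewrite a_t t_c.
have h_cont : {within `[a, c], continuous h}.
  by apply: derivable_within_continuous => t /acX; exact: h_der.
have [m mac m_max] := EVT_max ac h_cont.
have hbm : h b <= h m by apply: m_max; rewrite in_itv /= ab bc.
have m_in : m \in `]a, c[.
  move: mac; rewrite !in_itv /= !lt_neqAle => /andP[-> ->]; rewrite !andbT.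
  by apply/andP; split; apply/eqP => E; subst m; lra.
exists m; first exact: acX.
split=> //; apply: (derive1_at_max ac) => // t /subset_itv_oo_cc; last exact: m_max.
by move/acX; exact: h_der.
Qed.

Lemma critical_point_below (h : R -> R) (a b c : R) :
  (forall z, X z -> derivable h z 1) -> X a -> X c ->
  a <= b -> b <= c -> h b < h a -> h b < h c ->
  exists2 m, X m & is_derive m 1 h 0 /\ h m <= h b.
Proof.
move=> h_der Xa Xc ab bc ha hc.
have Nh_der z : X z -> derivable (- h) z 1 by move/h_der/derivableN.
have Nha : (- h) a < (- h) b by rewrite ltrN2.
have Nhc : (- h) c < (- h) b by rewrite ltrN2.
have [m Xm [dm hbm]] := critical_point_above Nh_der Xa Xc ab bc Nha Nhc.
exists m => //; split; last by rewrite -lerN2.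
by have := is_deriveN dm; rewrite opprK oppr0.
Qed.

Lemma level_sets_order_convex (h : R -> R) (th : R) :
  (forall z, X z -> derivable h z 1) ->
  (forall p q, X p -> X q -> is_derive p 1 h 0 -> is_derive q 1 h 0 -> p = q) ->
  order_convex X (fun z => h z <= th) \/ order_convex X (fun z => ~ (h z <= th)).
Proof.
move=> h_der crit_uniq.
have [|not_sub] := pselect (order_convex X (fun z => h z <= th)); first by left.
right => a b c Xa _ Xc ab bc /negP; rewrite -ltNge => ha /negP; rewrite -ltNge => hc hb.
apply: not_sub => a' b' c' Xa' _ Xc' ab' bc' ha' hc'; rewrite leNgt; apply/negP => hb'.
have [m Xm [dm hm]] := critical_point_above h_der Xa' Xc' ab' bc'
  (le_lt_trans ha' hb') (le_lt_trans hc' hb').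
have [m' Xm' [dm' hm']] := critical_point_below h_der Xa Xc ab bc
  (le_lt_trans hb ha) (le_lt_trans hb hc).
have m_eq : m = m' := crit_uniq m m' Xm Xm' dm dm'.
by subst m'; lra.
Qed.

End CriticalPoints.

Section SurrogateFeatures.
Variable R : realType.
Implicit Types (f g : R -> R) (X : set R).

Lemma is_derive_taylor_crit f (j : nat) (p : R) : derivable f p 1 ->
  is_derive p 1 (fun z => z ^+ j * f z) (taylor_crit f j p).
Proof.
move=> /derivableP df.
have -> : (fun z => z ^+ j * f z) = (@id R) ^+ j * f.
  by apply/funext => z; rewrite /= exprfctE.
apply: is_derive_eq; rewrite /taylor_crit derive1E /=.
case: j => [|j] /=; first by rewrite mul0r scale0r scaler0 addr0 expr0 scale1r.
rewrite exprfctE /GRing.scale /= mulr1 exprS; ring.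
Qed.

Lemma surrogate_feature_level_sets X f g (j : nat) (th : R) :
  interpretable_taylor_kernel X f g ->
  order_convex X (fun z => surrogate_feature f g j z <= th) \/
  order_convex X (fun z => ~ (surrogate_feature f g j z <= th)).
Proof.
move=> [X_conn [_ [_ [f_der [_ [_ crit_uniq]]]]]].
pose k := Num.sqrt (derive1n j g 0 / (j`!)%:R).
have [k0|k_gt0] : k = 0 \/ 0 < k.
  by have := sqrtr_ge0 (derive1n j g 0 / (j`!)%:R); rewrite le0r => /orP[/eqP|]; [left|right].
  by left => a b c _ _ _ _ _; rewrite /surrogate_feature -/k k0 !mulr0.
pose h z := z ^+ j * f z.
have h_der z : X z -> is_derive z 1 h (taylor_crit f j z).
  by move/f_der; exact: is_derive_taylor_crit.
have h_crit p : X p -> is_derive p 1 h 0 -> taylor_crit f j p = 0.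
  by move=> Xp dp; rewrite -(derive_val (is_derive := h_der p Xp)) derive_val.
have h_crit_uniq p q : X p -> X q -> is_derive p 1 h 0 -> is_derive q 1 h 0 -> p = q.
  by move=> Xp Xq dp dq; apply: crit_uniq => //; exact: h_crit.
have sfE z : (surrogate_feature f g j z <= th) = (h z <= th / k).
  by rewrite ler_pdivlMr.
have [hX|hX] := level_sets_order_convex ((connected_intervalP _).1 X_conn) (th / k)
  (fun z Xz => ex_derive (is_derive := h_der z Xz)) h_crit_uniq; [left|right];
  by move=> a b c Xa Xb Xc ab bc; rewrite !sfE; exact: hX.
Qed.
End SurrogateFeatures.

Theorem theorem3 (R : realType) (d : nat) (X : 'I_d -> set R)
  (f g : 'I_d -> R -> R) (M : nat) :
  (forall i, interpretable_taylor_kernel (X i) (f i) (g i)) ->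
  (forall (S : set ('I_d -> R)), finite_set S ->
     (forall x, S x -> forall i, X i (x i)) ->
     forall (i : 'I_d) (j : nat) (th : R), (j <= M)%N ->
       interpretable_split S
         (fun x => surrogate_feature (f i) (g i) j (x i) <= th))
  /\
  (forall (S : set ('I_d -> R)), finite_set S ->
     (forall x, S x -> forall i, X i (x i)) ->
     forall T : cut_tree R d, cut_tree_orders_le M T ->
       interpretable_tree (cut_tree_to_split_tree f g T) S).
Proof.
move=> hK.
have cut_split S : finite_set S -> (forall x, S x -> forall i, X i (x i)) ->
    forall i j th,
    interpretable_split S (fun x => surrogate_feature (f i) (g i) j (x i) <= th).
  move=> fS SX i j th.
  exact: interpretable_split_order_convex fS (fun x Sx => SX x Sx i)
    (surrogate_feature_level_sets j th (hK i)).
split=> [S fS SX i j th _|]; first exact: cut_split.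
move=> S fS SX T; elim: T S fS SX => [|i j th l IHl r IHr] S fS SX //= [_ [Ml Mr]].
split; first exact: cut_split.
- apply: IHl Ml; first by apply: sub_finite_set fS => x [].
  by move=> x [/SX].
- apply: IHr Mr; first by apply: sub_finite_set fS => x [].
  by move=> x [/SX].
Qed.
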